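(* Let $\tau>1$, $\gamma>0$, $\alpha\in D_{\gamma,\tau}$ with partial quotients $a_1,a_2,\dots$ and convergents $p_n/q_n$. Then for every even $n\ge0$: $$\frac{p_n}{q_n}+\frac{\gamma}{q_n^{\tau+1}}<\frac{p_{n+2}}{q_{n+2}}-\frac{\gamma}{q_{n+2}^{\tau+1}}$$ holds if and only if $$a_{n+2}>\frac{q_n}{\gamma q_{n+1}}\cdot\frac{1}{\left(\frac{1}{\gamma}-\frac{q_{n+1}}{q_n^{\tau}}\right)-\frac{q_nq_{n+1}}{q_{n+2}^{\tau+1}}}-\frac{q_n}{q_{n+1}}.$$
   Context: For $x\in\mathbb{R}$, $\|x\|:=\min_{p\in\mathbb{Z}}|x-p|$; $\mathbb{N}=\{1,2,\dots\}$. For $\gamma>0,\tau\ge1$, $D_{\gamma,\tau}:=\{\alpha\in(0,1): \|q\alpha\|\ge\gamma/q^\tau\ \forall q\in\mathbb{N}\}$; its elements are irrational. For irrational $\alpha\in(0,1)$ write $\alpha=\cfrac{1}{a_1+\cfrac{1}{a_2+\cdots}}$ (partial quotients $a_n\in\mathbb{N}$), and let $p_n/q_n$ ($n\ge0$) be its convergents: $p_{-1}=1,q_{-1}=0,p_0=0,q_0=1$, $p_n=a_np_{n-1}+p_{n-2}$, $q_n=a_nq_{n-1}+q_{n-2}$. *)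

From Stdlib Require Import Reals ZArith Arith.
Open Scope R_scope.

(* floor: Int_part x = up x - 1 is the floor of x for every real x. *)
(* ||x|| = min_{p in Z} |x - p| = min (x - floor x, floor x + 1 - x). *)
Definition distZ (x : R) : R :=
  Rmin (x - IZR (Int_part x)) (IZR (Int_part x) + 1 - x).

Definition inD (gamma tau alpha : R) : Prop :=
  0 < alpha < 1 /\
  forall q : nat, (1 <= q)%nat ->
    distZ (INR q * alpha) >= gamma / Rpower (INR q) tau.

Fixpoint gauss_iter (alpha : R) (k : nat) : R :=
  match k with
  | O => alpha
  | S k' => let x := gauss_iter alpha k' in / x - IZR (Int_part (/ x))
  end.

(* partial quotients: a_n = floor (1 / x_{n-1}) for n >= 1 (a_0 unused) *)
Definition pquot (alpha : R) (n : nat) : Z :=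
  Int_part (/ gauss_iter alpha (Nat.pred n)).

(* cf_pq alpha n = ((p_{n-1}, q_{n-1}), (p_n, q_n)) *)
Fixpoint cf_pq (alpha : R) (n : nat) : (Z * Z) * (Z * Z) :=
  match n with
  | O => ((1%Z, 0%Z), (0%Z, 1%Z))
  | S k =>
      let '((pm, qm), (p, q)) := cf_pq alpha k in
      let a := pquot alpha (S k) in
      ((p, q), (a * p + pm, a * q + qm)%Z)
  end.

Definition conv_p (alpha : R) (n : nat) : Z := fst (snd (cf_pq alpha n)).
Definition conv_q (alpha : R) (n : nat) : Z := snd (snd (cf_pq alpha n)).

(* Write [e_k = q_k alpha - p_k].  Both sides of the equivalence reduce to
   [a_(n+2) > gamma q_(n+2) / q_n^tau + gamma q_n / q_(n+2)^tau]; for the right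
   one this needs its inner denominator to be positive, which follows from the
   Diophantine bounds [gamma / q_k^tau <= |e_k|] for [k = n, n+1] combined with
   [e_n > 0 > e_(n+1)] and [q_(n+1) e_n - q_n e_(n+1) = 1].  Membership in
   [D_(gamma,tau)] also forces every [e_k] to be nonzero, so the Gauss iterates
   never vanish and all partial quotients are at least 1. *)

From Stdlib Require Import Reals ZArith Arith Lra Lia.
Open Scope R_scope.

Lemma Rpower_gt0 x y : 0 < Rpower x y.
Proof. apply exp_pos. Qed.

Lemma Rpower_plus1 x t : 0 < x -> Rpower x (t + 1) = Rpower x t * x.
Proof. intros Hx. rewrite Rpower_plus, Rpower_1 by exact Hx. reflexivity. Qed.

Lemma Rlt_iff_pos_of_sub x y c z : 0 < c -> x - y = c * z -> (y < x <-> 0 < z).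
Proof. intros Hc E; split; intros H; nra. Qed.

Lemma pow_neg1_even n : Nat.Even n -> (-1) ^ n = 1.
Proof.
  intros [m ->]. rewrite pow_mult. replace ((-1) ^ 2) with 1 by ring. apply pow1.
Qed.

Lemma distZ_le_Rabs_sub x z : distZ x <= Rabs (x - IZR z).
Proof.
  unfold distZ. destruct (base_Int_part x) as [Hlo Hhi].
  destruct (Z_le_gt_dec z (Int_part x)) as [Hz|Hz].
  - apply IZR_le in Hz. rewrite Rabs_right by lra.
    apply Rle_trans with (x - IZR (Int_part x)); [apply Rmin_l | lra].
  - assert (Hz' : (Int_part x + 1 <= z)%Z) by lia.
    apply IZR_le in Hz'. rewrite plus_IZR in Hz'. rewrite Rabs_left1 by lra.
    apply Rle_trans with (IZR (Int_part x) + 1 - x); [apply Rmin_r | lra].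
Qed.

Lemma inD_dist_lb gamma tau alpha m z :
  inD gamma tau alpha -> (1 <= m)%Z ->
  gamma / Rpower (IZR m) tau <= Rabs (IZR m * alpha - IZR z).
Proof.
  intros [_ HD] Hm.
  assert (Hm' : INR (Z.to_nat m) = IZR m) by (rewrite INR_IZR_INZ, Z2Nat.id by lia; reflexivity).
  assert (H1 : (1 <= Z.to_nat m)%nat) by lia.
  specialize (HD _ H1). rewrite Hm' in HD.
  pose proof (distZ_le_Rabs_sub (IZR m * alpha) z). lra.
Qed.

Lemma convergent_gap_iff g a p0 p1 p2 q0 q1 q2 r0 r2 :
  0 < g -> 0 < q0 -> 0 < q1 -> 0 < q2 -> 0 < r0 -> 0 < r2 ->
  q2 = a * q1 + q0 -> p2 = a * p1 + p0 -> p1 * q0 - p0 * q1 = 1 ->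
  0 < (/ g - q1 / r0) - q0 * q1 / (r2 * q2) ->
  (p0 / q0 + g / (r0 * q0) < p2 / q2 - g / (r2 * q2))
  <->
  (a > q0 / (g * q1) * / ((/ g - q1 / r0) - q0 * q1 / (r2 * q2)) - q0 / q1).
Proof.
  intros Hg Hq0 Hq1 Hq2 Hr0 Hr2 Eq2 Ep2 Hdet HD.
  set (thr := g * q2 / r0 + g * q0 / r2).
  set (D := (/ g - q1 / r0) - q0 * q1 / (r2 * q2)) in *.
  assert (Hcross : p2 * q0 - p0 * q2 = a).
  { transitivity (a * (p1 * q0 - p0 * q1)); [rewrite Eq2, Ep2; ring | rewrite Hdet; ring]. }
  assert (Hleft : (p2 / q2 - g / (r2 * q2)) - (p0 / q0 + g / (r0 * q0))
                  = / (q0 * q2) * (a - thr)).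
  { unfold thr. rewrite <- Hcross. field. lra. }
  assert (Hthr : a - thr = (g * D * q2 - q0) / q1).
  { unfold thr, D. rewrite Eq2. field. lra. }
  assert (Hright : a - (q0 / (g * q1) * / D - q0 / q1) = / (g * D) * (a - thr)).
  { rewrite Hthr. clearbody D. rewrite Eq2. field. lra. }
  assert (Hc0 : 0 < / (q0 * q2)) by (apply Rinv_0_lt_compat; nra).
  assert (Hc1 : 0 < / (g * D)) by (apply Rinv_0_lt_compat; nra).
  unfold Rgt.
  rewrite (Rlt_iff_pos_of_sub _ _ _ _ Hc0 Hleft), (Rlt_iff_pos_of_sub _ _ _ _ Hc1 Hright).
  reflexivity.
Qed.

Lemma convergent_gap_denom_pos g q0 q1 q2 r0 r1 r2 :
  0 < g -> 0 < q0 -> 0 < q1 -> 0 < q2 -> 0 < r0 -> 0 < r1 -> 0 < r2 ->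
  g * q1 / r0 + g * q0 / r1 <= 1 -> q1 * r1 < q2 * r2 ->
  0 < (/ g - q1 / r0) - q0 * q1 / (r2 * q2).
Proof.
  intros Hg Hq0 Hq1 Hq2 Hr0 Hr1 Hr2 Hsum Hmono.
  assert (Hlt : q1 / (r2 * q2) < / r1).
  { apply (Rmult_lt_reg_r (r1 * (r2 * q2))); [nra|].
    field_simplify; [lra | lra | lra]. }
  assert (Hlt' : g * q0 * (q1 / (r2 * q2)) < g * q0 / r1).
  { unfold Rdiv at 2. apply Rmult_lt_compat_l; nra. }
  apply (Rmult_lt_reg_l g); [exact Hg|].
  replace (g * ((/ g - q1 / r0) - q0 * q1 / (r2 * q2)))
    with (1 - g * q1 / r0 - g * q0 * (q1 / (r2 * q2))) by (field; lra).
  lra.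
Qed.

Section Convergents.

Variable alpha : R.

Local Notation x k := (gauss_iter alpha k).
Local Notation a k := (IZR (pquot alpha k)).
Local Notation p k := (IZR (conv_p alpha k)).
Local Notation q k := (IZR (conv_q alpha k)).
Local Notation err k := (q k * alpha - p k).

Lemma conv_p_SS k : p (S (S k)) = a (S (S k)) * p (S k) + p k.
Proof.
  unfold conv_p. simpl. destruct (cf_pq alpha k) as [[pm qm] [p0 q0]]. simpl.
  rewrite plus_IZR, mult_IZR. reflexivity.
Qed.

Lemma conv_q_SS k : q (S (S k)) = a (S (S k)) * q (S k) + q k.
Proof.
  unfold conv_q. simpl. destruct (cf_pq alpha k) as [[pm qm] [p0 q0]]. simpl.
  rewrite plus_IZR, mult_IZR. reflexivity.
Qed.

Lemma conv_pq0 : p 0 = 0 /\ q 0 = 1.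
Proof. split; reflexivity. Qed.

Lemma conv_pq1 : p 1 = 1 /\ q 1 = a 1.
Proof. unfold conv_p, conv_q. simpl. split; f_equal; ring. Qed.

Lemma conv_det k : p (S k) * q k - p k * q (S k) = (-1) ^ k.
Proof.
  induction k as [|k IH].
  - destruct conv_pq0 as [-> ->]. destruct conv_pq1 as [-> ->]. ring.
  - rewrite conv_p_SS, conv_q_SS, <- tech_pow_Rmult, <- IH. ring.
Qed.

Lemma gauss_iter_S_bounds k : 0 <= x (S k) < 1.
Proof. simpl. destruct (base_Int_part (/ x k)). lra. Qed.

Lemma pquot_ge1 k : 0 < x k < 1 -> 1 <= a (S k).
Proof.
  intros Hx. unfold pquot. simpl Nat.pred.
  assert (1 < / x k) by (rewrite <- Rinv_1; apply Rinv_lt_contravar; lra).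
  destruct (base_Int_part (/ x k)).
  assert (Hp : (0 < Int_part (/ x k))%Z) by (apply lt_IZR; lra).
  apply IZR_le. lia.
Qed.

Lemma conv_err_S k :
  (forall j, (j <= k)%nat -> x j <> 0) -> err (S k) = - x (S k) * err k.
Proof.
  induction k as [|k IH]; intros Hx.
  - destruct conv_pq0 as [-> ->]. destruct conv_pq1 as [-> ->].
    assert (H0 : x 0 <> 0) by (apply Hx; lia). simpl in H0 |- *.
    unfold pquot. simpl. field. exact H0.
  - assert (Hk : x (S k) <> 0) by (apply Hx; lia).
    specialize (IH (fun j Hj => Hx j ltac:(lia))).
    rewrite conv_p_SS, conv_q_SS.
    transitivity (a (S (S k)) * err (S k) + err k); [ring|].
    rewrite IH. change (x (S (S k))) with (/ x (S k) - a (S (S k))).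
    field. exact Hk.
Qed.

Lemma conv_q_mono_upto k :
  (forall j, (j <= k)%nat -> 0 < x j < 1) -> 1 <= q k <= q (S k).
Proof.
  induction k as [|k IH]; intros Hx.
  - destruct conv_pq0 as [_ ->]. destruct conv_pq1 as [_ ->].
    pose proof (pquot_ge1 0 (Hx 0%nat (le_n 0))). lra.
  - destruct (IH (fun j Hj => Hx j ltac:(lia))) as [Hq0 Hq1].
    pose proof (pquot_ge1 (S k) (Hx (S k) (le_n _))).
    rewrite conv_q_SS. nra.
Qed.

Variables gamma tau : R.
Hypothesis gamma_gt0 : 0 < gamma.
Hypothesis alpha_inD : inD gamma tau alpha.

Lemma inD_gauss_iter_in01 k : 0 < x k < 1.
Proof.
  enough (Hall : forall j, (j <= k)%nat -> 0 < x j < 1) by (apply Hall; lia).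
  induction k as [|k IH]; intros j Hj.
  - replace j with 0%nat by lia. exact (proj1 alpha_inD).
  - destruct (Nat.eq_dec j (S k)) as [->|Hne]; [|apply IH; lia].
    destruct (gauss_iter_S_bounds k) as [[Hpos|Hzero] Hlt1]; [lra|exfalso].
    assert (Herr : err (S k) = 0).
    { rewrite conv_err_S, <- Hzero; [ring|].
      intros i Hi. specialize (IH i Hi). lra. }
    destruct (conv_q_mono_upto k IH) as [Hq0 Hq1].
    pose proof (inD_dist_lb gamma tau alpha (conv_q alpha (S k)) (conv_p alpha (S k))
                  alpha_inD ltac:(apply le_IZR; simpl; lra)) as Hlb.
    rewrite Herr, Rabs_R0 in Hlb.
    assert (0 < gamma / Rpower (q (S k)) tau)
      by (apply Rdiv_lt_0_compat; [exact gamma_gt0 | apply Rpower_gt0]).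
    lra.
Qed.

Lemma conv_q_mono k : 1 <= q k <= q (S k).
Proof. apply conv_q_mono_upto. intros j _. apply inD_gauss_iter_in01. Qed.

Lemma inD_conv_err_lb k : gamma / Rpower (q k) tau <= Rabs (err k).
Proof.
  destruct (conv_q_mono k) as [Hq _].
  apply inD_dist_lb; [exact alpha_inD | apply le_IZR; simpl; lra].
Qed.

Lemma even_conv_cross n : Nat.Even n -> q (S n) * err n - q n * err (S n) = 1.
Proof.
  intros Hn. rewrite <- (pow_neg1_even n Hn), <- conv_det. ring.
Qed.

Lemma even_conv_err_sign n : Nat.Even n -> 0 < err n /\ err (S n) < 0.
Proof.
  intros Hn.
  pose proof (even_conv_cross n Hn) as Hcross.
  rewrite conv_err_S in Hcross |- *
    by (intros j _; pose proof (inD_gauss_iter_in01 j); lra).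
  pose proof (inD_gauss_iter_in01 (S n)).
  pose proof (conv_q_mono n).
  assert (Herr : err n * (q (S n) + q n * x (S n)) = 1) by (rewrite <- Hcross; ring).
  assert (HF : 0 < q (S n) + q n * x (S n)) by nra.
  assert (0 < err n).
  { destruct (Rlt_or_le 0 (err n)) as [|Hle]; [assumption|].
    pose proof (Rmult_le_compat_r _ _ _ (Rlt_le _ _ HF) Hle). lra. }
  split; nra.
Qed.

Lemma even_conv_dioph_sum n : Nat.Even n ->
  gamma * q (S n) / Rpower (q n) tau + gamma * q n / Rpower (q (S n)) tau <= 1.
Proof.
  intros Hn.
  destruct (even_conv_err_sign n Hn) as [He0 He1].
  destruct (conv_q_mono n) as [Hq0 Hq1].
  pose proof (inD_conv_err_lb n) as Hlb0.
  pose proof (inD_conv_err_lb (S n)) as Hlb1.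
  rewrite Rabs_right in Hlb0 by lra. rewrite Rabs_left in Hlb1 by lra.
  pose proof (even_conv_cross n Hn) as Hcross.
  unfold Rdiv. rewrite !Rmult_assoc, !(Rmult_comm (q _)), <- !Rmult_assoc.
  fold (gamma / Rpower (q n) tau) (gamma / Rpower (q (S n)) tau).
  nra.
Qed.

End Convergents.

Theorem lemma4 (tau gamma alpha : R) :
  1 < tau -> 0 < gamma -> inD gamma tau alpha ->
  forall n : nat, Nat.Even n ->
  let a := fun k => IZR (pquot alpha k) in
  let p := fun k => IZR (conv_p alpha k) in
  let q := fun k => IZR (conv_q alpha k) in
  (p n / q n + gamma / Rpower (q n) (tau + 1)
     < p (n + 2)%nat / q (n + 2)%nat - gamma / Rpower (q (n + 2)%nat) (tau + 1))
  <->
  (a (n + 2)%nat >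
     q n / (gamma * q (n + 1)%nat) *
       / ((/ gamma - q (n + 1)%nat / Rpower (q n) tau)
          - q n * q (n + 1)%nat / Rpower (q (n + 2)%nat) (tau + 1))
     - q n / q (n + 1)%nat).
Proof.
  intros Htau Hg HD n Hn a p q. subst a p q. cbv beta.
  replace (n + 2)%nat with (S (S n)) by lia.
  replace (n + 1)%nat with (S n) by lia.
  destruct (conv_q_mono alpha gamma tau Hg HD n) as [Hq0 Hq1].
  destruct (conv_q_mono alpha gamma tau Hg HD (S n)) as [_ Hq2].
  pose proof (pquot_ge1 alpha (S n) (inD_gauss_iter_in01 alpha gamma tau Hg HD (S n))).
  pose proof (conv_q_SS alpha n) as Eq2.
  assert (Hq12 : IZR (conv_q alpha (S n)) < IZR (conv_q alpha (S (S n)))) by nra.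
  assert (Hmono : Rpower (IZR (conv_q alpha (S n))) (tau + 1)
                  < Rpower (IZR (conv_q alpha (S (S n)))) (tau + 1))
    by (apply Rlt_Rpower_l; lra).
  rewrite !Rpower_plus1 in Hmono |- * by lra.
  apply convergent_gap_iff with (p1 := IZR (conv_p alpha (S n))); try lra;
    try apply Rpower_gt0.
  - apply conv_p_SS.
  - rewrite <- (pow_neg1_even n Hn), <- (conv_det alpha n). ring.
  - apply convergent_gap_denom_pos
      with (r1 := Rpower (IZR (conv_q alpha (S n))) tau); try lra; try apply Rpower_gt0.
    apply (even_conv_dioph_sum alpha gamma tau Hg HD n Hn).
Qed.
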